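(* Let $\Bbbk$ be a field and let $\mathbf M$ be a matroid on a finite set $S$ that is representable over $\Bbbk$. Let $b\in S$ and let $\Delta_b=\{J\subseteq S : b\notin \overline{J}\}$ be the affine simplicial complex of $\mathbf M$ away from $b$. Then for all $i\ge 0$ \[ \dim_\Bbbk \widetilde{H}_i(\Delta_b,\Bbbk)=\begin{cases}\beta(\mathbf M) & \text{if } i=r(\mathbf M)-2,\\ 0 & \text{otherwise.}\end{cases} \] Furthermore, if $b$ is not a loop of $\mathbf M$, then this equality holds for all integers $i$.
   Context: $r$ denotes the rank function of $\mathbf M$ and $r(\mathbf M)=r(S)$. $\overline{J}$ denotes the matroid closure of $J$ (the smallest flat containing $J$). A loop is an element $a$ with $\{a\}$ dependent. The $\beta$-invariant is $\beta(\mathbf M)=(-1)^{r(S)}\sum_{J\subseteq S}(-1)^{|J|}r(J)$. $\widetilde H$ denotes reduced simplicial homology with coefficients in $\Bbbk$. *)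

From HB Require Import structures.
From mathcomp Require Import all_boot all_order all_algebra.
Set Implicit Arguments. Unset Strict Implicit. Unset Printing Implicit Defensive.
Import Order.TTheory GRing.Theory Num.Theory.
Local Open Scope ring_scope.

Record matroid (S : finType) := Matroid {
  mrank : {set S} -> nat;
  mrank_le_card : forall J, (mrank J <= #|J|)%N;
  mrank_mono : forall J K : {set S}, J \subset K -> (mrank J <= mrank K)%N;
  mrank_submod : forall J K : {set S},
    (mrank (J :|: K) + mrank (J :&: K) <= mrank J + mrank K)%N
}.

Definition representable (k : fieldType) (S : finType) (M : matroid S) : Prop :=
  exists (n : nat) (v : S -> 'rV[k]_n),
    forall J : {set S}, mrank M J = \rank (\sum_(j in J) <<v j>>)%MS.

Definition mrankM (S : finType) (M : matroid S) : nat := mrank M [set: S].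

Definition mclosure (S : finType) (M : matroid S) (J : {set S}) : {set S} :=
  [set x | mrank M (x |: J) == mrank M J].

Definition is_loop (S : finType) (M : matroid S) (a : S) : bool :=
  mrank M [set a] == 0%N.

Definition beta_inv (S : finType) (M : matroid S) : int :=
  (-1) ^+ mrankM M * \sum_(J : {set S}) (-1) ^+ #|J| * (mrank M J)%:Z.

Definition affine_complex (S : finType) (M : matroid S) (b : S) : {set {set S}} :=
  [set J : {set S} | b \notin mclosure M J].

(* i-dimensional faces: faces with i+1 vertices (i = -1 gives the empty face) *)
Definition faces (S : finType) (D : {set {set S}}) (i : int) : {set {set S}} :=
  [set s in D | (#|s|%:Z == i + 1)].

(* incidence sign [sigma : tau] for tau = sigma \ {x}, vertices ordered
   via the enumeration of S *)
Definition bd_coef (k : fieldType) (S : finType) (s t : {set S}) : k :=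
  \sum_(x in s | t == s :\ x)
     (-1) ^+ #|[set y in s | (enum_rank y < enum_rank x)%N]|.

(* boundary map d_i : C_i -> C_{i-1}, as a matrix acting on row vectors
   (row sigma = boundary of sigma). *)
Definition bdmx (k : fieldType) (S : finType) (D : {set {set S}}) (i : int)
  : 'M[k]_(#|faces D i|, #|faces D (i - 1)|) :=
  \matrix_(p, q) bd_coef k (enum_val p) (enum_val q).

(* dim_k of reduced homology H~_i(D, k) = dim (ker d_i / im d_{i+1}).
   The boundaries im d_{i+1} are the rows of bdmx (i+1), indexed by
   faces D ((i+1) - 1) which we cast to faces D i. *)
Definition red_homology_dim (k : fieldType) (S : finType) (D : {set {set S}})
  (i : int) : nat :=
  let Z := kermx (bdmx k D i) in
  let B := bdmx k D (i + 1) in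
  let B' : 'M[k]_(#|faces D (i + 1)|, #|faces D i|) :=
    castmx (erefl, congr1 (fun j => #|faces D j|) (addrK 1 i)) B in
  \rank (Z :\: B')%MS.

From mathcomp Require Import all_boot all_order all_algebra.
From mathcomp Require Import ring zify.
Import Order.TTheory GRing.Theory Num.Theory.
Local Open Scope ring_scope.
Set Implicit Arguments. Unset Strict Implicit. Unset Printing Implicit Defensive.

(* The complex away from [b] is shown acyclic outside degree [r(M) - 2] at the
   chain level, by induction on the ground set. Coning off a vertex [e] is a chain
   homotopy on the full simplex, so the complex is acyclic when [e] is a loop or a
   coloop (it is then a cone over [e]); otherwise it is the union of the deletion
   of [e] and the cone over the link of [e], which is the complex of the
   contraction [M / e], of rank one less, and a Mayer-Vietoris argument applies.
   The one remaining homology group is then computed by the Euler-Poincare formula: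
   pairing [J] with [b |: J] turns [sum_J (-1)^|J| r(J)] into minus the reduced
   Euler characteristic of the complex. *)

Section SimplicialChains.

Variables (k : fieldType) (S : finType).
Implicit Types (s t : {set S}) (f g : {set S} -> k).

Definition nbelow s (x : S) : nat :=
  #|[set y in s | (enum_rank y < enum_rank x)%N]|.

Definition bsign s (x : S) : k := (-1) ^+ nbelow s x.

Lemma nbelowU1 s x y : x \notin s ->
  nbelow (x |: s) y = (nbelow s y + (enum_rank x < enum_rank y))%N.
Proof.
move=> xs; rewrite /nbelow.
case h: (enum_rank x < enum_rank y)%N.
  have -> : [set z in x |: s | (enum_rank z < enum_rank y)%N] =
    x |: [set z in s | (enum_rank z < enum_rank y)%N].
    apply/setP=> z; rewrite !inE; case: (eqVneq z x) => [->|nzx] /=;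
    by rewrite ?h ?(negbTE xs) ?andbF ?orbF.
  by rewrite cardsU1 inE (negbTE xs) /= addnC addn1.
have -> : [set z in x |: s | (enum_rank z < enum_rank y)%N] =
  [set z in s | (enum_rank z < enum_rank y)%N].
  apply/setP=> z; rewrite !inE; case: (eqVneq z x) => [->|nzx] /=;
  by rewrite ?h ?(negbTE xs) ?andbF ?orbF.
by rewrite addn0.
Qed.

Lemma nbelowD1 s x y : x \in s ->
  nbelow s y = (nbelow (s :\ x) y + (enum_rank x < enum_rank y))%N.
Proof. by move=> xs; rewrite -{1}(setD1K xs) nbelowU1 // !inE eqxx. Qed.

Lemma bsign_sqr s x : bsign s x * bsign s x = 1.
Proof. by rewrite -expr2 sqrr_sign. Qed.

Lemma bd_coefE s t : bd_coef k s t = \sum_(x in s | t == s :\ x) bsign s x.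
Proof. by []. Qed.

Lemma setD1_inj s x y : x \in s -> y \in s -> s :\ x = s :\ y -> x = y.
Proof.
move=> xs ys e; apply/eqP; apply: contraT => neq.
have : x \in s :\ y by rewrite !inE neq xs.
by rewrite -e !inE eqxx.
Qed.

Lemma bd_coef_setD1 s x : x \in s -> bd_coef k s (s :\ x) = bsign s x.
Proof.
move=> xs; rewrite bd_coefE (big_pred1 x) // => y /=.
apply/andP/eqP => [[ys /eqP e]|->]; last by split.
by apply: setD1_inj ys xs _; rewrite e.
Qed.

Lemma bd_coef_eq0 s t : (forall x, x \in s -> t <> s :\ x) -> bd_coef k s t = 0.
Proof.
move=> H; rewrite bd_coefE big1 // => x /andP[xs /eqP e].
by case: (H x xs).
Qed.

Lemma bd_coef_neq0 s t : bd_coef k s t != 0 -> exists2 x, x \in s & t = s :\ x.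
Proof.
move=> nz; case: (boolP [exists x in s, t == s :\ x]).
  by move=> /exists_inP [x xs /eqP ->]; exists x.
move=> /exists_inPn H; move: nz; rewrite bd_coef_eq0 ?eqxx // => x xs e1.
by move: (H x xs); rewrite e1 eqxx.
Qed.

Lemma sum_bd_coef s (F : {set S} -> k) :
  \sum_t bd_coef k s t * F t = \sum_(x in s) bsign s x * F (s :\ x).
Proof.
under eq_bigr do rewrite bd_coefE big_distrl.
rewrite (exchange_big_dep (fun x => x \in s)) /=; last by move=> i j _ /andP[].
apply: eq_bigr => x xs; rewrite (big_pred1 (s :\ x)) // => t /=.
by rewrite xs.
Qed.

(* Deleting two vertices in either order gives signs that differ by exactly one
   transposition, so the terms of [bd o bd] cancel in pairs. *)
Lemma sum_bd_coef_bd_coef s t : \sum_u bd_coef k s u * bd_coef k u t = 0.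
Proof.
rewrite sum_bd_coef.
under eq_bigr do rewrite bd_coefE big_distrr.
pose F x y := if (x \in s) && ((y \in s :\ x) && (t == s :\ x :\ y))
  then bsign s x * bsign (s :\ x) y else 0.
have -> : \sum_(x in s) \sum_(y in s :\ x | t == s :\ x :\ y)
    bsign s x * bsign (s :\ x) y = \sum_x \sum_y F x y.
  rewrite big_mkcond; apply: eq_bigr => x _ /=.
  case: ifP => xs; last by rewrite big1 // => y _; rewrite /F xs.
  by rewrite big_mkcond; apply: eq_bigr => y _; rewrite /F xs.
have -> : \sum_x \sum_y F x y = \sum_x \sum_y
   ((if (enum_rank x < enum_rank y)%N then F x y else 0) +
    (if (enum_rank y < enum_rank x)%N then F x y else 0)).
  apply: eq_bigr => x _; apply: eq_bigr => y _.
  case: (ltngtP (enum_rank x) (enum_rank y)) => h; rewrite ?addr0 ?add0r //.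
  have -> : y = x by apply: enum_rank_inj; apply: val_inj.
  by rewrite /F !inE eqxx /= andbF.
under eq_bigr do rewrite big_split /=.
rewrite big_split /= [X in _ + X]exchange_big /=.
rewrite -big_split /= big1 // => x _; rewrite -big_split /= big1 // => y _.
case: ltngtP => h; rewrite ?addr0 ?add0r //.
rewrite /F !inE [s :\ y :\ x]setDDl setUC -setDDl.
case: (eqVneq y x) => [yx|yx]; first by rewrite yx ltnn in h.
case xs: (x \in s); case ys: (y \in s); case: (t == _) => //=; rewrite ?addr0 //.
rewrite /bsign [nbelow s y](nbelowD1 y xs) [nbelow s x](nbelowD1 x ys) h.
rewrite ltnNge (ltnW h) /= addn0 addn1 exprS; ring.
Qed.

Definition bd f t : k := \sum_s f s * bd_coef k s t.

Lemma eq_bd f g : f =1 g -> bd f =1 bd g.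
Proof. by move=> fg t; apply: eq_bigr => s _; rewrite fg. Qed.

Lemma bdD f g t : bd (fun s => f s + g s) t = bd f t + bd g t.
Proof. by rewrite /bd -big_split; apply: eq_bigr => s _; rewrite mulrDl. Qed.

Lemma bdN f t : bd (fun s => - f s) t = - bd f t.
Proof. by rewrite /bd -sumrN; apply: eq_bigr => s _; rewrite mulNr. Qed.

Lemma bdB f g t : bd (fun s => f s - g s) t = bd f t - bd g t.
Proof. by rewrite bdD bdN. Qed.

Lemma bdK f t : bd (bd f) t = 0.
Proof.
rewrite /bd; under eq_bigr do rewrite big_distrl.
rewrite exchange_big /= big1 // => s _.
under eq_bigr do rewrite -mulrA.
by rewrite -mulr_sumr sum_bd_coef_bd_coef mulr0.
Qed.

Definition cone_op (e : S) f s : k :=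
  if e \in s then bsign s e * f (s :\ e) else 0.

Lemma setU1D1C s e x : x != e -> (e |: s) :\ x = e |: (s :\ x).
Proof.
move=> xe; apply/setP=> z; rewrite !inE.
by case: (eqVneq z e) => [->|] //=; rewrite eq_sym xe.
Qed.

(* The two ways of going from [e |: s] to [t = e |: (s :\ x)] pass the vertices
   [x] and [e] in opposite orders. *)
Lemma cone_coef_cancel e s t : e \notin s -> e \in t -> s != t ->
  bsign (e |: s) e * bd_coef k (e |: s) t + bsign t e * bd_coef k s (t :\ e) = 0.
Proof.
move=> es et nst.
case: (boolP [exists x in s, t == e |: (s :\ x)]); last first.
  move=> /exists_inPn H.
  have -> : bd_coef k (e |: s) t = 0.
    apply: bd_coef_eq0 => x /setU1P[->|xs] e1.
      by move/eqP: nst; apply; rewrite e1 setU1K.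
    have xe : x != e by apply: contraTneq xs => ->.
    by move: (H x xs); rewrite e1 setU1D1C // eqxx.
  have -> : bd_coef k s (t :\ e) = 0.
    apply: bd_coef_eq0 => x xs e1.
    by move: (H x xs); rewrite -e1 (setD1K et) eqxx.
  by rewrite !mulr0 addr0.
move=> /exists_inP [x xs /eqP tE].
have xe : x != e by apply: contraTneq xs => ->.
have E1 : t = (e |: s) :\ x by rewrite setU1D1C.
have E2 : t :\ e = s :\ x by rewrite tE setU1K // !inE (negbTE es) andbF.
rewrite {1}E1 bd_coef_setD1; last by rewrite !inE xs orbT.
rewrite E2 bd_coef_setD1 // /bsign.
rewrite nbelowU1 // ltnn addn0 nbelowU1 //.
rewrite tE nbelowU1 ?inE ?(negbTE es) ?andbF // ltnn addn0 (nbelowD1 e xs).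
have ne : enum_rank x != enum_rank e by apply: contra xe => /eqP /enum_rank_inj ->.
case: (ltngtP (enum_rank x) (enum_rank e)) => h; last by rewrite -val_eqE /= h eqxx in ne.
all: by rewrite /= !addn0 !addn1 !exprS; ring.
Qed.

Lemma cone_homotopy_coef e s t :
  (if e \in s then 0 else bsign (e |: s) e * bd_coef k (e |: s) t) +
  (if e \in t then bsign t e * bd_coef k s (t :\ e) else 0) = (s == t)%:R.
Proof.
case es: (e \in s); case et: (e \in t) => /=; rewrite ?add0r ?addr0.
- case: (eqVneq s t) => [<-|/eqP nst]; first by rewrite bd_coef_setD1 // bsign_sqr.
  rewrite bd_coef_eq0 ?mulr0 // => x xs e1.
  case: (eqVneq x e) => [xe|xe].
    by apply: nst; rewrite -(setD1K es) -(setD1K et) e1 xe.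
  have : e \in s :\ x by rewrite !inE eq_sym xe es.
  by rewrite -e1 !inE eqxx.
- by case: (eqVneq s t) => [st|//]; rewrite st et in es.
- case: (eqVneq s t) => [st|nst]; first by rewrite st et in es.
  by rewrite cone_coef_cancel ?es.
- case: (eqVneq s t) => [<-|/eqP nst].
    by rewrite -{3}(setU1K (negbT es)) bd_coef_setD1 ?bsign_sqr // !inE eqxx.
  rewrite bd_coef_eq0 ?mulr0 // => x xs e1.
  case: (eqVneq x e) => [xe|xe]; first by apply: nst; rewrite e1 xe setU1K ?es.
  by move: et; rewrite e1 !inE eqxx eq_sym xe.
Qed.

Lemma cone_homotopy e f t : bd (cone_op e f) t + cone_op e (bd f) t = f t.
Proof.
rewrite /bd /cone_op.
pose tog s := if e \in s then s :\ e else e |: s.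
have togK : involutive tog.
  move=> s; rewrite /tog; case h: (e \in s); first by rewrite !inE eqxx /= setD1K.
  by rewrite setU11 setU1K ?h.
rewrite (reindex_inj (inv_inj togK)) /=.
have -> : \sum_s (if e \in tog s then bsign (tog s) e * f (tog s :\ e) else 0)
      * bd_coef k (tog s) t =
    \sum_s f s * (if e \in s then 0 else bsign (e |: s) e * bd_coef k (e |: s) t).
  apply: eq_bigr => s _; rewrite /tog; case h: (e \in s).
    by rewrite !inE eqxx /= mul0r mulr0.
  by rewrite setU11 setU1K ?h // mulrA [f s * _]mulrC.
have -> : (if e \in t then bsign t e * \sum_s f s * bd_coef k s (t :\ e) else 0) =
    \sum_s f s * (if e \in t then bsign t e * bd_coef k s (t :\ e) else 0).
  case: ifP => _; last by rewrite big1 // => s _; rewrite mulr0.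
  by rewrite mulr_sumr; apply: eq_bigr => s _; rewrite mulrCA.
rewrite -big_split /=.
under eq_bigr do rewrite -mulrDr cone_homotopy_coef.
rewrite (bigD1 t) //= eqxx mulr1 big1 ?addr0 // => s /negbTE ->.
by rewrite mulr0.
Qed.

Definition supported f (A : {set {set S}}) := forall s, f s != 0 -> s \in A.

(* Chains are functions on all of [{set S}]; a chain of [D] in degree [i] is one
   supported on [faces D i]. *)
Definition exact_at (D : {set {set S}}) (i : int) :=
  forall f, supported f (faces D i) -> (forall t, bd f t = 0) ->
  exists g, supported g (faces D (i + 1)) /\ (forall t, bd g t = f t).

Lemma in_faces (D : {set {set S}}) i s :
  (s \in faces D i) = (s \in D) && (#|s|%:Z == i + 1).
Proof. by rewrite inE. Qed.

Lemma exact_at_nofaces (D : {set {set S}}) i : faces D i = set0 -> exact_at D i.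
Proof.
move=> D0 f sf _; exists (fun=> 0); split=> [s|t]; first by rewrite eqxx.
case: (eqVneq (f t) 0) => [->|/sf]; last by rewrite D0 inE.
by rewrite /bd big1 // => s _; rewrite mul0r.
Qed.

Lemma exact_at_cone (D : {set {set S}}) e i :
  (forall s, s \in D -> e \notin s -> e |: s \in D) -> exact_at D i.
Proof.
move=> cone f sf cyc; exists (cone_op e f); split.
  move=> s; rewrite /cone_op; case: ifP => es; last by rewrite eqxx.
  rewrite mulf_eq0 negb_or => /andP[_ /sf]; rewrite !in_faces => /andP[Ds /eqP c].
  have := cone _ Ds; rewrite setD1K // !inE eqxx /= => -> //=.
  rewrite (cardsD1 e s) es; apply/eqP; rewrite PoszD c; lia.
move=> t; move: (cone_homotopy e f t).
by rewrite {2}/cone_op cyc mulr0 if_same addr0.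
Qed.

Definition del_part e f s : k := if e \in s then 0 else f s.
Definition link_part e f s : k :=
  if e \in s then 0 else bsign (e |: s) e * f (e |: s).

Lemma del_link_partE e f s : f s = del_part e f s + cone_op e (link_part e f) s.
Proof.
rewrite /del_part /cone_op /link_part; case es: (e \in s); rewrite ?add0r ?addr0 //.
by rewrite !inE eqxx /= setD1K // mulrA bsign_sqr mul1r.
Qed.

Lemma link_part_bd e f : (forall t, bd f t = 0) ->
  forall t, link_part e f t = - bd (del_part e f) t.
Proof.
move=> cf t; case et: (e \in t).
  rewrite /link_part et /bd big1 ?oppr0 // => s _; rewrite /del_part.
  case: ifP => es; first by rewrite mul0r.
  rewrite bd_coef_eq0 ?mulr0 // => u us tE.
  by move: et; rewrite tE !inE es andbF.
move: (cf t) (cone_homotopy e (link_part e f) t).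
rewrite (eq_bd (del_link_partE e f)) bdD => /eqP + <-.
by rewrite addr_eq0 [cone_op e (bd _) t]/cone_op et addr0 => /eqP ->; rewrite opprK.
Qed.

(* Mayer-Vietoris for [D = (D \ e) U cone(link e)]: exactness of the deletion at
   [i] and of the link at [i - 1] give exactness of [D] at [i]. *)
Lemma exact_at_glue (D : {set {set S}}) e i :
  (forall s, e |: s \in D -> s \in D) ->
  exact_at [set s : {set S} in D | e \notin s] i ->
  exact_at [set s : {set S} | (e \notin s) && (e |: s \in D)] (i - 1) ->
  exact_at D i.
Proof.
move=> dc Adel Alink z sz cz.
set x := del_part e z; set y := link_part e z.
have yE := link_part_bd e cz.
have cy t : bd y t = 0 by rewrite (eq_bd yE) bdN bdK oppr0.
have sy : supported y (faces [set s : {set S} | (e \notin s) && (e |: s \in D)] (i - 1)).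
  move=> s; rewrite /y /link_part; case: ifP => es; first by rewrite eqxx.
  rewrite mulf_eq0 negb_or => /andP[_ /sz]; rewrite !in_faces => /andP[D1 /eqP c1].
  rewrite !inE es D1 /=; apply/eqP; move: c1; rewrite cardsU1 es PoszD; lia.
have [v [sv bv]] := Alink y sy cy.
pose x' s := x s + v s.
have sx' : supported x' (faces [set s : {set S} in D | e \notin s] i).
  move=> s nz; case: (eqVneq (x s) 0) => [x0|].
    move: (sv s); rewrite /x' x0 add0r in nz * => /(_ nz).
    rewrite !in_faces !inE => /andP[/andP[es D1] /eqP c1].
    rewrite es (dc _ D1) /=; apply/eqP; rewrite c1; lia.
  rewrite /x /del_part; case: ifP => es; first by rewrite eqxx.
  by move=> /sz; rewrite !in_faces !inE es => /andP[-> ->].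
have cx' t : bd x' t = 0 by rewrite bdD bv /y yE addrN.
have [u [su bu]] := Adel x' sx' cx'.
exists (fun s => u s - cone_op e v s); split.
  move=> s nz; case: (eqVneq (u s) 0) => [u0|un].
    move: nz; rewrite u0 sub0r oppr_eq0 /cone_op; case: ifP => es; last by rewrite eqxx.
    rewrite mulf_eq0 negb_or => /andP[_ /sv].
    rewrite !in_faces !inE setD1K // => /andP[/andP[_ ->] /eqP c1] /=.
    apply/eqP; move: c1; rewrite (cardsD1 e s) es PoszD; lia.
  by move: (su s un); rewrite !in_faces !inE => /andP[/andP[-> _] ->].
move=> t; rewrite bdB bu.
have -> : bd (cone_op e v) t = v t - cone_op e y t.
  have -> : cone_op e y t = cone_op e (bd v) t by rewrite /cone_op bv.
  by rewrite -(cone_homotopy e v t) addrK.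
by rewrite /x' /x /y (del_link_partE e z t); ring.
Qed.

End SimplicialChains.

Section MatroidRank.

Variables (S : finType) (M : matroid S).
Implicit Types (x e : S) (X J K : {set S}).

Lemma mrank0 : mrank M set0 = 0%N.
Proof. by have := mrank_le_card M set0; rewrite cards0; lia. Qed.

Lemma mrank1_le1 x : (mrank M [set x] <= 1)%N.
Proof. by have := mrank_le_card M [set x]; rewrite cards1. Qed.

Lemma mrank_leU1 x X : (mrank M X <= mrank M (x |: X))%N.
Proof. by apply: mrank_mono; rewrite subsetUr. Qed.

Lemma mrank1_leU1 x X : (mrank M [set x] <= mrank M (x |: X))%N.
Proof. by apply: mrank_mono; rewrite subsetUl. Qed.

Lemma mrankU1_le x X : (mrank M (x |: X) <= mrank M [set x] + mrank M X)%N.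
Proof. by have := mrank_submod M [set x] X; lia. Qed.

Lemma mrank_loop e X : mrank M [set e] = 0%N -> mrank M (e |: X) = mrank M X.
Proof. by move=> h; have := mrankU1_le e X; have := mrank_leU1 e X; lia. Qed.

(* [e] is a coloop of the restriction of [M] to [E]. *)
Lemma mrank_coloop (E : {set S}) e X :
  e \in E -> (mrank M (E :\ e) < mrank M E)%N -> X \subset E :\ e ->
  mrank M (e |: X) = (mrank M X).+1.
Proof.
move=> eE colp XE.
have h := mrank_submod M (e |: X) (E :\ e).
have e1 : (e |: X) :|: (E :\ e) = E by rewrite -setUA (setUidPr XE) setD1K.
have e2 : (e |: X) :&: (E :\ e) = X.
  apply/setP=> z; rewrite !inE; case: (eqVneq z e) => [->|] /=.
    by apply/esym/negP => /(subsetP XE); rewrite !inE eqxx.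
  by move=> _; apply/andb_idr => /(subsetP XE); rewrite !inE => /andP[].
rewrite e1 e2 in h.
by have := mrankU1_le e X; have := mrank1_le1 e; lia.
Qed.

Definition contr_rank e X : nat := (mrank M (e |: X) - mrank M [set e])%N.

Lemma contr_rank_le_card e X : (contr_rank e X <= #|X|)%N.
Proof.
by rewrite /contr_rank; have := mrankU1_le e X; have := mrank_le_card M X; lia.
Qed.

Lemma contr_rank_mono e J K : J \subset K -> (contr_rank e J <= contr_rank e K)%N.
Proof.
by move=> JK; rewrite /contr_rank; have := mrank_mono M (setUS [set e] JK); lia.
Qed.

Lemma contr_rank_submod e J K :
  (contr_rank e (J :|: K) + contr_rank e (J :&: K) <= contr_rank e J + contr_rank e K)%N.
Proof.
rewrite /contr_rank.
have := mrank_submod M (e |: J) (e |: K); rewrite -setUUr -setUIr.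
have := mrank1_leU1 e (J :|: K); have := mrank1_leU1 e (J :&: K).
by have := mrank1_leU1 e J; have := mrank1_leU1 e K; lia.
Qed.

Definition contr e : matroid S :=
  Matroid (contr_rank_le_card e) (contr_rank_mono e) (contr_rank_submod e).

End MatroidRank.

Definition down_closed (S : finType) (D : {set {set S}}) :=
  forall J K : {set S}, K \in D -> J \subset K -> J \in D.

(* The affine complex of the restriction of [M] to [E], away from [b]. *)
Definition away_complex (S : finType) (M : matroid S) (E : {set S}) (b : S) :=
  [set J : {set S} | (J \subset E) && (mrank M (b |: J) != mrank M J)].

Section AwayComplex.

Variables (S : finType) (M : matroid S) (b : S).
Implicit Types (e : S) (E J : {set S}).

Lemma affine_complexE : affine_complex M b = away_complex M setT b.
Proof. by apply/setP => J; rewrite !inE subsetT. Qed.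

Lemma away_complex_down_closed E : down_closed (away_complex M E b).
Proof.
move=> J K; rewrite !inE => /andP[KE rK] JK; rewrite (subset_trans JK KE) /=.
apply: contra rK => /eqP rJ.
case bK: (b \in K); first by rewrite (setUidPr (_ : [set b] \subset K)) ?sub1set.
have h := mrank_submod M (b |: J) K.
have e1 : (b |: J) :|: K = b |: K by rewrite -setUA (setUidPr JK).
have e2 : (b |: J) :&: K = J.
  apply/setP=> z; rewrite !inE; case: (eqVneq z b) => [->|] /=.
    by rewrite bK; apply/esym/negP => /(subsetP JK); rewrite bK.
  by move=> _; apply/andb_idr => /(subsetP JK).
rewrite e1 e2 in h.
by have := mrank_leU1 M b K; rewrite eqn_leq; lia.
Qed.

Lemma away_complex_del E e :
  [set J in away_complex M E b | e \notin J] = away_complex M (E :\ e) b.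
Proof. by apply/setP=> J; rewrite !inE subsetD1 andbAC. Qed.

Lemma away_complex_link E e : e \in E ->
  [set J : {set S} | (e \notin J) && (e |: J \in away_complex M E b)] =
  away_complex (contr M e) (E :\ e) b.
Proof.
move=> eE; apply/setP=> J; rewrite !inE subsetD1 subUset sub1set eE /= /contr_rank.
rewrite setUCA.
have h1 := mrank1_leU1 M e (b |: J); have h2 := mrank1_leU1 M e J.
have -> : (mrank M (e |: (b |: J)) - mrank M [set e] !=
           mrank M (e |: J) - mrank M [set e])%N =
          (mrank M (e |: (b |: J)) != mrank M (e |: J)).
  by apply/idP/idP; apply: contra => /eqP h; apply/eqP; lia.
by case: (e \in J) (J \subset E) => [] [].
Qed.

Lemma away_complex_cone E e : e \in E -> b \in E :\ e ->
  mrank M [set e] = 0%N \/ (mrank M (E :\ e) < mrank M E)%N ->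
  forall J, J \in away_complex M E b -> e \notin J -> e |: J \in away_complex M E b.
Proof.
move=> eE bEe loop_coloop J; rewrite !inE => /andP[JE rJ] eJ.
rewrite subUset sub1set eE JE setUCA /=.
case: loop_coloop => [loop|colp]; first by rewrite !(mrank_loop _ loop).
have JE' : J \subset E :\ e by rewrite subsetD1 JE eJ.
have bJE' : b |: J \subset E :\ e by rewrite subUset sub1set bEe JE'.
by rewrite (mrank_coloop eE colp JE') (mrank_coloop eE colp bJE') eqSS.
Qed.

End AwayComplex.

Lemma faces_away_complex_point (S : finType) (M : matroid S) (E : {set S}) b (i : int) :
  E :\ b = set0 -> b \in E -> i != (mrank M E)%:Z - 2 ->
  faces (away_complex M E b) i = set0.
Proof.
move=> E0 bE hi; apply/setP=> s; rewrite in_faces !inE.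
apply/negbTE; apply/negP => /andP[/andP[sE rs] /eqP cs].
have s0 : s = set0.
  apply/eqP; rewrite -subset0 -E0 subsetD1 sE /=.
  by apply: contra rs => bs; rewrite (setUidPr (_ : [set b] \subset s)) ?sub1set.
have Eb : E = [set b] by rewrite -(setD1K bE) E0 setU0.
move: rs cs hi; rewrite s0 setU0 mrank0 cards0 Eb.
by have := mrank1_le1 M b; case: (mrank M [set b]) => [|[|]] //= _ _; lia.
Qed.

(* Induction on [E]: a loop or coloop [e] makes the complex a cone; otherwise
   glue the deletion of [e] (same rank) to its link, which is the complex of the
   contraction [M / e] (rank one less). *)
Lemma exact_at_away_complex (k : fieldType) (S : finType) n (M : matroid S)
    (E : {set S}) b (i : int) :
  #|E| = n -> b \in E -> i != (mrank M E)%:Z - 2 ->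
  exact_at k (away_complex M E b) i.
Proof.
elim: n M E i => [|n IH] M E i cE bE hi.
  by move/eqP: cE; rewrite cards_eq0 => /eqP E0; rewrite E0 inE in bE.
case: (set_0Vmem (E :\ b)) => [E0 | [e eEb]].
  by apply: exact_at_nofaces; apply: faces_away_complex_point.
have eE : e \in E by move: eEb; rewrite inE => /andP[].
have bEe : b \in E :\ e by move: eEb; rewrite !inE eq_sym bE andbT => /andP[].
have cE' : #|E :\ e| = n by move: cE; rewrite (cardsD1 e E) eE; case.
case: (boolP ((mrank M [set e] == 0%N) || (mrank M (E :\ e) < mrank M E)%N)).
  move=> /orP loop_coloop; apply: (exact_at_cone (e := e)).
  by apply: away_complex_cone => //; case: loop_coloop => [/eqP|]; [left|right].
rewrite negb_or -leqNgt => /andP[nloop ncolp].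
have rEe : mrank M (E :\ e) = mrank M E.
  by apply/eqP; rewrite eqn_leq ncolp mrank_mono ?subD1set.
have re1 : mrank M [set e] = 1%N by have := mrank1_le1 M e; move: nloop; lia.
have rE1 : (1 <= mrank M E)%N by rewrite -re1 mrank_mono ?sub1set.
apply: (exact_at_glue (e := e)).
- by move=> J /away_complex_down_closed; apply; rewrite subsetUr.
- by rewrite away_complex_del; apply: IH cE' bEe _; rewrite rEe.
- rewrite away_complex_link //; apply: IH cE' bEe _.
  rewrite /= /contr_rank setD1K // re1.
  by apply: contra hi => /eqP h; apply/eqP; lia.
Qed.

Lemma rank_castmx (F : fieldType) m1 n1 m2 n2 (e : (m1 = m2) * (n1 = n2))
  (A : 'M[F]_(m1, n1)) : \rank (castmx e A) = \rank A.
Proof. by case: e => e1 e2; case: m2 / e1; case: n2 / e2; rewrite castmx_id. Qed.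

Section BoundaryMatrices.

Variables (k : fieldType) (S : finType) (D : {set {set S}}).
Hypothesis dcD : down_closed D.

Lemma bdmxE i p q : bdmx k D i p q = bd_coef k (enum_val p) (enum_val q).
Proof. by rewrite mxE. Qed.

Lemma bd_coef_faces i s t :
  s \in faces D i -> bd_coef k s t != 0 -> t \in faces D (i - 1).
Proof.
rewrite !in_faces => /andP[sD /eqP cs] /bd_coef_neq0 [x xs ->].
rewrite (dcD sD) ?subD1set //=; apply/eqP.
by move: cs; rewrite (cardsD1 x s) xs PoszD; lia.
Qed.

Lemma enum_val_cast (i j : int) (Hj : j = i) (e : #|faces D j| = #|faces D i|)
  (p : 'I_#|faces D i|) : enum_val (cast_ord (esym e) p) = enum_val p.
Proof. by subst j; congr enum_val; apply: val_inj. Qed.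

Definition bdmx_succ i : 'M[k]_(#|faces D (i + 1)|, #|faces D i|) :=
  castmx (erefl, congr1 (fun j => #|faces D j|) (addrK 1 i)) (bdmx k D (i + 1)).

Lemma bdmx_succE i p q : bdmx_succ i p q = bd_coef k (enum_val p) (enum_val q).
Proof.
by rewrite castmxE bdmxE (enum_val_cast (addrK 1 i)) (enum_val_cast (erefl _)).
Qed.

Lemma mulmx_bdmx_succ i : bdmx_succ i *m bdmx k D i = 0.
Proof.
apply/matrixP => q t; rewrite !mxE.
under eq_bigr do rewrite bdmx_succE bdmxE.
rewrite -(big_enum_val (A := fun x => x \in faces D i)
  (fun s => bd_coef k (enum_val q) s * bd_coef k s (enum_val t))) /=.
rewrite big_rmcond ?sum_bd_coef_bd_coef // => s ns.
case: (eqVneq (bd_coef k (enum_val q) s) 0) => [->|nz]; first by rewrite mul0r.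
by move: ns; have := bd_coef_faces (enum_valP q) nz; rewrite addrK => ->.
Qed.

Lemma red_homology_dimE i : (red_homology_dim k D i)%:Z =
  #|faces D i|%:Z - (\rank (bdmx k D i))%:Z - (\rank (bdmx k D (i + 1)))%:Z.
Proof.
rewrite /red_homology_dim -/(bdmx_succ i).
set Z := kermx _; set B := bdmx_succ i.
have BZ : (B <= Z)%MS by apply/sub_kermxP; apply: mulmx_bdmx_succ.
have h := mxrank_cap_compl Z B; rewrite (capmx_idPr BZ) in h.
have rB : \rank B = \rank (bdmx k D (i + 1)) by rewrite rank_castmx.
have rZ : \rank Z = (#|faces D i| - \rank (bdmx k D i))%N by rewrite mxrank_ker.
have := mxrankS BZ; have := rank_leq_row (bdmx k D i).
rewrite rZ -rB => le1 le2.
rewrite -/Z -/B (_ : \rank (Z :\: B) = \rank Z - \rank B)%N; last by lia.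
by rewrite rZ -!subzn // -rZ.
Qed.

Definition row_chain i (u : 'rV[k]_#|faces D i|) (s : {set S}) : k :=
  \sum_(p | enum_val p == s) u 0 p.

Lemma row_chainE i u p : row_chain (i := i) u (enum_val p) = u 0 p.
Proof. by rewrite /row_chain (big_pred1 p) // => q; rewrite /= (inj_eq enum_val_inj). Qed.

Lemma row_chain_supported i u : supported (row_chain (i := i) u) (faces D i).
Proof.
move=> s; apply: contraNT => ns; rewrite /row_chain big_pred0 // => p.
by apply: contraNF ns => /eqP <-; apply: enum_valP.
Qed.

Lemma bd_row_chain i u t :
  bd (row_chain (i := i) u) t = \sum_p u 0 p * bd_coef k (enum_val p) t.
Proof.
rewrite /bd (bigID (mem (faces D i))) /= [X in _ + X]big1 ?addr0; last first.
  move=> s ns; rewrite (_ : row_chain u s = 0) ?mul0r //.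
  by apply: contraNeq ns => /row_chain_supported.
rewrite big_enum_val /=.
by apply: eq_bigr => p _; rewrite row_chainE.
Qed.

Lemma red_homology_dim_eq0 i : exact_at k D i -> red_homology_dim k D i = 0%N.
Proof.
move=> exD; rewrite /red_homology_dim -/(bdmx_succ i).
set Z := kermx _; set B := bdmx_succ i.
suff ZB : (Z <= B)%MS.
  have := mxrank_cap_compl Z B; rewrite (capmx_idPl ZB) => /eqP.
  by rewrite -[X in _ == X]addn0 eqn_add2l => /eqP.
apply/row_subP => p0; set u := row p0 Z.
have uA : u *m bdmx k D i = 0 by apply/sub_kermxP; rewrite row_sub.
have cf t : bd (row_chain u) t = 0.
  rewrite bd_row_chain; case: (boolP (t \in faces D (i - 1))) => tf.
    rewrite -(enum_rankK_in tf tf).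
    move/matrixP: uA => /(_ 0 (enum_rank_in tf t)); rewrite !mxE => h.
    by rewrite -[RHS]h; apply: eq_bigr => p _; rewrite bdmxE.
  rewrite big1 // => p _.
  case: (eqVneq (bd_coef k (enum_val p) t) 0) => [->|nz]; first by rewrite mulr0.
  by move: tf; rewrite (bd_coef_faces (enum_valP p) nz).
have [g [sg bg]] := exD _ (@row_chain_supported i u) cf.
apply/submxP; exists (\row_q g (enum_val q)); apply/rowP => p.
rewrite -row_chainE -bg [RHS]mxE.
under eq_bigr do rewrite bdmx_succE mxE.
rewrite -(big_enum_val (A := fun x => x \in faces D (i + 1))
  (fun s => g s * bd_coef k s (enum_val p))) /=.
rewrite big_rmcond // => s ns.
by rewrite (_ : g s = 0) ?mul0r //; apply: contraNeq ns => /sg.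
Qed.

End BoundaryMatrices.

Lemma telescope_alt (a : nat -> int) m :
  \sum_(j < m) (-1) ^+ j * (a j + a j.+1) = a 0%N - (-1) ^+ m * a m.
Proof.
elim: m => [|m IH]; first by rewrite big_ord0 expr0 mul1r subrr.
by rewrite big_ord_recr /= IH exprS; ring.
Qed.

Section EulerCharacteristic.

Variables (S : finType) (D : {set {set S}}).

Lemma faces_eq0 i : (forall s, s \in D -> #|s|%:Z != i + 1) -> faces D i = set0.
Proof.
move=> H; apply/setP => s; rewrite in_faces inE.
by case: (boolP (s \in D)) => //= /H /negbTE.
Qed.

Lemma sum_card_faces :
  \sum_(j < #|S|.+2) (-1) ^+ j * #|faces D (j%:Z - 1)|%:Z =
  \sum_(J in D) (-1) ^+ #|J| :> int.
Proof.
have -> : \sum_(j < #|S|.+2) (-1) ^+ j * #|faces D (j%:Z - 1)|%:Z =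
  \sum_(j < #|S|.+2) \sum_(J in D) (if #|J| == j then (-1) ^+ j else 0 : int).
  apply: eq_bigr => j _.
  rewrite -natz mulr_natr -sumr_const big_mkcond [RHS]big_mkcond.
  apply: eq_bigr => J _; rewrite in_faces.
  case: (J \in D) => //=.
  by rewrite (_ : (#|J|%:Z == j%:Z - 1 + 1) = (#|J| == j)) //; apply/eqP/eqP; lia.
rewrite exchange_big /=; apply: eq_bigr => J _.
have lt : (#|J| < #|S|.+2)%N by have := max_card J; lia.
rewrite (bigD1 (Ordinal lt)) //= eqxx big1 ?addr0 // => j nj.
by case: eqP => // e; case/eqP: nj; apply: val_inj.
Qed.

Lemma euler_poincare (k : fieldType) : down_closed D ->
  \sum_(j < #|S|.+2) (-1) ^+ j * (red_homology_dim k D (j%:Z - 1))%:Z =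
  \sum_(J in D) (-1) ^+ #|J|.
Proof.
move=> dcD; rewrite -sum_card_faces.
pose a (j : nat) := (\rank (bdmx k D (j%:Z - 1)))%:Z.
have -> : \sum_(j < #|S|.+2) (-1) ^+ j * (red_homology_dim k D (j%:Z - 1))%:Z =
    \sum_(j < #|S|.+2) (-1) ^+ j * #|faces D (j%:Z - 1)|%:Z -
    \sum_(j < #|S|.+2) (-1) ^+ j * (a j + a j.+1).
  rewrite -sumrB; apply: eq_bigr => j _; rewrite red_homology_dimE // /a.
  by rewrite (_ : j%:Z - 1 + 1 = j.+1%:Z - 1); [ring | lia].
have a0 : a 0%N = 0.
  apply/eqP; rewrite eqz_nat -leqn0 (leq_trans (rank_leq_col _)) //.
  by rewrite faces_eq0 ?cards0.
have a_top : a #|S|.+2 = 0.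
  apply/eqP; rewrite eqz_nat -leqn0 (leq_trans (rank_leq_row _)) //.
  rewrite faces_eq0 ?cards0 // => s _; have := max_card s; lia.
by rewrite telescope_alt a0 a_top mulr0 subrr subr0.
Qed.

End EulerCharacteristic.

(* Pairing [J] with [b |: J] for [b \notin J]: the rank jumps by one exactly
   when [J] is a face of the complex away from [b]. *)
Lemma sum_mrank_sign (S : finType) (M : matroid S) (b : S) :
  \sum_(J : {set S}) (-1) ^+ #|J| * (mrank M J)%:Z =
  - \sum_(J in away_complex M setT b) (-1) ^+ #|J| :> int.
Proof.
pose tog (s : {set S}) := if b \in s then s :\ b else b |: s.
have togK : involutive tog.
  move=> s; rewrite /tog; case h: (b \in s); first by rewrite !inE eqxx /= setD1K.
  by rewrite setU11 setU1K ?h.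
have -> : \sum_(J in away_complex M setT b) (-1) ^+ #|J| =
   \sum_(J : {set S} | b \notin J)
     (if J \in away_complex M setT b then (-1) ^+ #|J| else 0 : int).
  rewrite big_mkcond (bigID (fun J : {set S} => b \in J)) /= big1 ?add0r // => J bJ.
  by rewrite inE (setUidPr (_ : [set b] \subset J)) ?sub1set // eqxx andbF.
rewrite -sumrN (bigID (fun J : {set S} => b \in J)) /= addrC.
rewrite [X in _ + X = _](reindex_inj (inv_inj togK)) /=.
have -> : \sum_(J | b \in tog J) (-1) ^+ #|tog J| * (mrank M (tog J))%:Z =
  \sum_(J : {set S} | b \notin J) (-1) ^+ #|b |: J| * (mrank M (b |: J))%:Z.
  by apply: eq_big => J; rewrite /tog; case h: (b \in J); rewrite ?setU11 ?inE ?eqxx.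
rewrite -big_split /=; apply: eq_bigr => J bJ.
rewrite cardsU1 bJ add1n exprS inE subsetT /=.
have h1 := mrankU1_le M b J; have h2 := mrank1_le1 M b; have h3 := mrank_leU1 M b J.
case: eqP => [->|h]; first by ring.
have -> : mrank M (b |: J) = (mrank M J).+1 by lia.
by rewrite -addn1 PoszD; ring.
Qed.


Lemma red_homology_dim_affine_complex (k : fieldType) (S : finType) (M : matroid S)
    (b : S) (i : int) :
  (red_homology_dim k (affine_complex M b) i)%:Z =
  (if i == (mrankM M)%:Z - 2 then beta_inv M else 0).
Proof.
rewrite affine_complexE /beta_inv /mrankM (sum_mrank_sign M b).
set D := away_complex M setT b; set r := mrank M setT.
have dcD : down_closed D by apply: away_complex_down_closed.
have exact_off j : j != r%:Z - 2 -> red_homology_dim k D j = 0%N.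
  move=> hj; apply: red_homology_dim_eq0 => //.
  by apply: (@exact_at_away_complex k S #|S|) => //; rewrite cardsT.
case: eqP => [ei|/eqP ne]; last by rewrite exact_off.
have := euler_poincare k dcD.
case: (posnP r) => [r0|rpos].
  rewrite big1 => [<-|j _]; last first.
    by rewrite exact_off ?mulr0 //; apply/eqP; rewrite r0; lia.
  rewrite oppr0 mulr0 red_homology_dim_eq0 //.
  by apply: exact_at_nofaces; apply: faces_eq0 => s _; apply/eqP; rewrite ei r0; lia.
have lt : (r.-1 < #|S|.+2)%N.
  by have := mrank_le_card M setT; rewrite cardsT -/r; lia.
rewrite (bigD1 (Ordinal lt)) //= big1 ?addr0 => [<-|j nj]; last first.
  rewrite exact_off ?mulr0 //; apply: contra nj => /eqP h.
  by apply/eqP; apply: val_inj => /=; lia.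
rewrite (_ : r.-1%:Z - 1 = i); last by lia.
rewrite -{1}(prednK rpos) exprS mulN1r mulrN mulNr opprK mulrA -expr2 sqrr_sign.
by rewrite mul1r.
Qed.

Unset Implicit Arguments.

Theorem theorem3p2 (k : fieldType) (S : finType) (M : matroid S)
  (Hrep : representable k M) (b : S) :
  (forall i : nat,
     (red_homology_dim k (affine_complex M b) i%:Z)%:Z =
       if i%:Z == (mrankM M)%:Z - 2 then beta_inv M else 0)
  /\
  (~~ is_loop M b ->
   forall i : int,
     (red_homology_dim k (affine_complex M b) i)%:Z =
       if i == (mrankM M)%:Z - 2 then beta_inv M else 0).
Proof. by split=> [i|_ i]; apply: red_homology_dim_affine_complex. Qed.
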